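(* Let $U$ be a subgroup of $G^*$. Then there exists a resolute and $U$-symmetric matching mechanism if and only if $C^U(p)\neq\varnothing$ for every $p\in\mathcal{P}$.
   Context: Fix $n\ge 2$, $W=\{1,\dots,n\}$, $M=\{n+1,\dots,2n\}$, $I=W\cup M$. Permutations compose right-to-left. A preference profile is a function $p$ on $I$ assigning to each $x\in W$ a linear order $p(x)$ on $M$ and to each $y\in M$ a linear order $p(y)$ on $W$; $\mathcal{P}$ is the set of preference profiles. A matching is a permutation $\mu$ of $I$ with $\mu(W)=M$, $\mu(M)=W$, $\mu(\mu(z))=z$; $\mathcal{M}$ is the set of matchings. $G^*=\{\varphi\in\mathrm{Sym}(I):\{\varphi(W),\varphi(M)\}=\{W,M\}\}$. For a linear order $R$ on $X\subseteq I$ and $\varphi\in\mathrm{Sym}(I)$, $\varphi R$ is the relation on $\varphi(X)$ with $(a,b)\in\varphi R$ iff $(\varphi^{-1}(a),\varphi^{-1}(b))\in R$. For $\varphi\in G^*$, $p^\varphi(z)=\varphi\,p(\varphi^{-1}(z))$; $\mu^\varphi=\varphi\mu\varphi^{-1}$; $S^\varphi=\{\mu^\varphi:\mu\in S\}$. A matching mechanism is a correspondence $F$ from $\mathcal{P}$ to $\mathcal{M}$; resolute if $|F(p)|=1$ for all $p$; $U$-symmetric if $F(p^\varphi)=F(p)^\varphi$ for all $p$, $\varphi\in U$. $\mathrm{Stab}_U(p)=\{\varphi\in U:p^\varphi=p\}$ and $C^U(p)=\{\mu\in\mathcal{M}:\mu^\varphi=\mu\text{ for all }\varphi\in\mathrm{Stab}_U(p)\}$.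 *)

(* Agents I = {0,...,2n-1} ('I_(n+n)); W = {0..n-1}, M = {n..2n-1}
   (0-based shift of the paper's {1..n}, {n+1..2n}). *)
From mathcomp Require Import all_boot all_fingroup.
Set Implicit Arguments. Unset Strict Implicit. Unset Printing Implicit Defensive.
Local Open Scope group_scope.

Section Matching.
Variable n : nat.

Definition agent := 'I_(n + n).
Definition Wset : {set agent} := [set i : agent | (i < n)%N].
Definition Mset : {set agent} := [set i : agent | (n <= i)%N].

Definition relation := {set agent * agent}.

Definition linear_order_on (X : {set agent}) (R : relation) : Prop :=
  [/\ R \subset setX X X,
      (forall a, a \in X -> (a, a) \in R),
      (forall a b, (a, b) \in R -> (b, a) \in R -> a = b),
      (forall a b c, (a, b) \in R -> (b, c) \in R -> (a, c) \in R) &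
      (forall a b, a \in X -> b \in X -> ((a, b) \in R) || ((b, a) \in R))].

Definition profile := {ffun agent -> relation}.

Definition is_profile (p : profile) : Prop :=
  (forall x, x \in Wset -> linear_order_on Mset (p x)) /\
  (forall y, y \in Mset -> linear_order_on Wset (p y)).

Definition is_matching (mu : {perm agent}) : Prop :=
  [/\ mu @: Wset = Mset, mu @: Mset = Wset & mu * mu = 1].

Definition Gstar : {set {perm agent}} :=
  [set phi : {perm agent} | [set phi @: Wset; phi @: Mset] == [set Wset; Mset]].

Definition rel_act (phi : {perm agent}) (R : relation) : relation :=
  [set ab : agent * agent | ((phi^-1)%g ab.1, (phi^-1)%g ab.2) \in R].

Definition prof_act (p : profile) (phi : {perm agent}) : profile :=
  [ffun z => rel_act phi (p ((phi^-1)%g z))].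

(* mu^phi = phi mu phi^-1 (right-to-left composition); in MathComp's
   left-to-right perm product this is the conjugate mu ^ phi = phi^-1 * mu * phi,
   i.e. (mu ^ phi) z = phi (mu (phi^-1 z)). *)
Definition match_act (mu phi : {perm agent}) : {perm agent} := mu ^ phi.

Definition set_act (S : {set {perm agent}}) (phi : {perm agent}) : {set {perm agent}} :=
  [set match_act mu phi | mu in S].

Definition mechanism := profile -> {set {perm agent}}.

Definition is_mechanism (F : mechanism) : Prop :=
  forall p, is_profile p -> forall mu, mu \in F p -> is_matching mu.

Definition resolute (F : mechanism) : Prop :=
  forall p, is_profile p -> #|F p| = 1%N.

Definition U_symmetric (U : {set {perm agent}}) (F : mechanism) : Prop :=
  forall p phi, is_profile p -> phi \in U -> F (prof_act p phi) = set_act (F p) phi.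

Definition Stab (U : {set {perm agent}}) (p : profile) : {set {perm agent}} :=
  [set phi in U | prof_act p phi == p].

Definition CU (U : {set {perm agent}}) (p : profile) (mu : {perm agent}) : Prop :=
  is_matching mu /\ (forall phi, phi \in Stab U p -> match_act mu phi = mu).

End Matching.

From Stdlib Require Import ClassicalEpsilon.
From mathcomp Require Import all_boot all_fingroup.
Set Implicit Arguments. Unset Strict Implicit. Unset Printing Implicit Defensive.
Local Open Scope group_scope.

(* If F is resolute and U-symmetric with F p = {mu}, then for phi in Stab_U(p)
   symmetry gives {mu^phi} = F (p^phi) = F p = {mu}, so mu lies in C^U(p).
   Conversely, U acts on profiles; choose in every U-orbit a representative
   profile r and some mu_r in C^U(r), and set F (r^t) = {mu_r^t} for t in U.
   This is well defined because t is determined by r^t up to left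
   multiplication by Stab_U(r), which fixes mu_r; symmetry is then built in,
   and mu_r^t is a matching because conjugation by G* preserves matchings. *)

Lemma conjg_amove_act (aT : finGroupType) (rT : finType)
    (to : {action aT &-> rT}) (G : {group aT}) (x : rT) (mu a : aT) :
  (forall b, b \in 'C_G[x | to] -> mu ^ b = mu) -> a \in G ->
  [set mu ^ b | b in amove to G x (to x a)] = [set mu ^ a].
Proof.
move=> mu_fixed Ga; rewrite amove_act ?subsetT //; apply/setP => nu; rewrite inE.
apply/imsetP/eqP => [[_ /rcosetP[b Cb ->] ->] | ->].
  by rewrite conjgM (mu_fixed _ Cb).
by exists a; first exact: (rcoset_refl 'C_G[x | to]%G).
Qed.

Section ProfileAction.
Variable n : nat.
Implicit Types (p : profile n) (phi psi mu : {perm agent n}).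

Lemma prof_act1 p : prof_act p 1 = p.
Proof.
apply/ffunP => z; rewrite !ffunE /rel_act invg1 perm1.
by apply/setP => -[a b]; rewrite inE /= !perm1.
Qed.

Lemma prof_actM p phi psi : prof_act p (phi * psi) = prof_act (prof_act p phi) psi.
Proof.
apply/ffunP => z; rewrite !ffunE /rel_act invMg permM.
by apply/setP => -[a b]; rewrite !inE /= !permM.
Qed.

Canonical prof_action := TotalAction prof_act1 prof_actM.

Lemma Stab_astab1 (U : {set {perm agent n}}) p : Stab U p = 'C_U[p | prof_action].
Proof. by apply/setP => phi; rewrite !inE sub1set inE. Qed.

Lemma Gstar_cases phi : phi \in Gstar n ->
  (phi @: Wset n = Wset n /\ phi @: Mset n = Mset n) \/
  (phi @: Wset n = Mset n /\ phi @: Mset n = Wset n).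
Proof.
rewrite inE => /eqP E.
have phiW : phi @: Wset n \in [set Wset n; Mset n] by rewrite -E !inE eqxx.
have phiM : phi @: Mset n \in [set Wset n; Mset n] by rewrite -E !inE eqxx orbT.
have phi_inj := imset_inj (@perm_inj _ phi).
move: phiW phiM; rewrite !inE => /orP[]/eqP eW /orP[]/eqP eM; [| by left | by right |].
- by left; rewrite eW eM; split=> //; apply: phi_inj; rewrite eW eM.
- by right; rewrite eW eM; split=> //; apply: phi_inj; rewrite eW eM.
Qed.

Lemma conjg_imset mu phi (A : {set agent n}) :
  (mu ^ phi) @: (phi @: A) = phi @: (mu @: A).
Proof.
by rewrite -!imset_comp; apply: eq_imset => x /=; rewrite /conjg !permM permK.
Qed.

Lemma matching_act mu phi : phi \in Gstar n -> is_matching mu ->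
  is_matching (match_act mu phi).
Proof.
move=> /Gstar_cases phiWM [muW muM muK]; rewrite /match_act.
split; last by rewrite -conjMg muK conj1g.
- by case: phiWM => -[eW eM]; [rewrite -{1}eW conjg_imset muW eM
                              | rewrite -{1}eM conjg_imset muM eW].
- by case: phiWM => -[eW eM]; [rewrite -{1}eM conjg_imset muM eW
                              | rewrite -{1}eW conjg_imset muW eM].
Qed.

End ProfileAction.

Lemma resolute_symmetric_CU n (U : {set {perm agent n}}) (F : mechanism n) p :
  is_mechanism F -> resolute F -> U_symmetric U F -> is_profile p ->
  exists mu, CU U p mu.
Proof.
move=> Fmatch Fres Fsym hp; have [mu Fp] := cards1P (introT eqP (Fres p hp)).
exists mu; split=> [|phi]; first by apply: (Fmatch p hp); rewrite Fp set11.
rewrite inE => /andP[Uphi /eqP fix_p].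
by have := Fsym p phi hp Uphi; rewrite fix_p /set_act Fp imset_set1 => /set1_inj.
Qed.

Section OrbitMechanism.
Variables (n : nat) (U : {group {perm agent n}}).
Implicit Types (p r : profile n).

Definition orbit_rep p : profile n :=
  epsilon (inhabits [ffun=> set0])
    (fun q => q \in orbit (prof_action n) U p /\ is_profile q).

Definition canonical_matching r : {perm agent n} := epsilon (inhabits 1) (CU U r).

Definition orbit_mechanism : mechanism n := fun p =>
  [set match_act (canonical_matching (orbit_rep p)) a
     | a in amove (prof_action n) U (orbit_rep p) p].

Lemma orbit_rep_spec p : is_profile p ->
  orbit_rep p \in orbit (prof_action n) U p /\ is_profile (orbit_rep p).
Proof.
move=> hp; apply: (epsilon_spec _ (fun q => q \in orbit _ U p /\ is_profile q)).
by exists p; split=> //; apply: orbit_refl.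
Qed.

Lemma orbit_rep_act p phi : phi \in U -> orbit_rep (prof_act p phi) = orbit_rep p.
Proof. by move=> Uphi; rewrite /orbit_rep (orbit_act _ _ Uphi). Qed.

Lemma orbit_rep_move p : is_profile p ->
  exists2 t, t \in U & prof_act (orbit_rep p) t = p.
Proof.
case/orbit_rep_spec => /orbit_eqP orbit_eq _.
by apply/(orbitP (to := prof_action n)); rewrite orbit_eq orbit_refl.
Qed.

Hypothesis CU_nonempty : forall p, is_profile p -> exists mu, CU U p mu.

Lemma canonical_matchingP r : is_profile r -> CU U r (canonical_matching r).
Proof. by move=> hr; apply: epsilon_spec; apply: CU_nonempty. Qed.

Lemma orbit_mechanismE p t :
  is_profile (orbit_rep p) -> t \in U -> prof_act (orbit_rep p) t = p ->
  orbit_mechanism p = [set match_act (canonical_matching (orbit_rep p)) t].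
Proof.
move=> hr Ut rt_p; rewrite /orbit_mechanism -[X in amove _ _ _ X]rt_p.
apply: conjg_amove_act Ut => b; rewrite -Stab_astab1.
exact: (canonical_matchingP hr).2.
Qed.

Lemma orbit_mechanism_matching : U \subset Gstar n -> is_mechanism orbit_mechanism.
Proof.
move=> UG p hp mu /imsetP[a]; rewrite inE => /andP[Ua _] ->.
apply: matching_act; first exact: (subsetP UG).
exact: (canonical_matchingP (orbit_rep_spec hp).2).1.
Qed.

Lemma orbit_mechanism_resolute : resolute orbit_mechanism.
Proof.
move=> p hp; have [t Ut rt_p] := orbit_rep_move hp.
by rewrite (orbit_mechanismE (orbit_rep_spec hp).2 Ut rt_p) cards1.
Qed.

Lemma orbit_mechanism_symmetric : U_symmetric U orbit_mechanism.
Proof.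
move=> p phi hp Uphi; have [t Ut rt_p] := orbit_rep_move hp.
have hr := (orbit_rep_spec hp).2.
rewrite (orbit_mechanismE hr Ut rt_p).
rewrite (@orbit_mechanismE _ (t * phi)) ?orbit_rep_act ?groupM ?prof_actM ?rt_p //.
by rewrite /set_act imset_set1 /match_act conjgM.
Qed.

End OrbitMechanism.

Theorem corollary1 (n : nat) (hn : (2 <= n)%N) (U : {group {perm agent n}})
    (hU : U \subset Gstar n) :
  (exists F : mechanism n,
      is_mechanism F /\ resolute F /\ U_symmetric U F) <->
  (forall p : profile n, is_profile p -> exists mu, CU U p mu).
Proof.
split=> [[F [Fmatch [Fres Fsym]]] p | CU_nonempty].
  exact: (resolute_symmetric_CU Fmatch Fres Fsym).
exists (orbit_mechanism U); split; [|split].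
- exact: orbit_mechanism_matching.
- exact: orbit_mechanism_resolute.
- exact: orbit_mechanism_symmetric.
Qed.
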